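(* Let $a\in \mathcal{A}$. Then the following are equivalent: (1) $a$ has a $w$-weighted core inverse. (2) $aw\in \mathcal{A}^{\#}$ and $waw\in \mathcal{A}^{(1,3)}$.
   Context: $\mathcal{A}$ is a complex Banach *-algebra with identity and $w\in\mathcal{A}$. $a$ has a $w$-weighted core inverse if there is $x$ with $a(wx)^2=x$, $(wawx)^*=wawx$, $xw(aw)^2=aw$. $\mathcal{A}^{\#}$ is the set of group invertible elements; $\mathcal{A}^{(1,3)}$ is the set of $b$ having some $y$ with $b=byb$ and $(by)^*=by$. *)

From mathcomp Require Import all_boot all_algebra.
Set Implicit Arguments. Unset Strict Implicit. Unset Printing Implicit Defensive.
Import GRing.Theory Num.Theory.
Local Open Scope ring_scope.

(* An involution on a complex algebra A (here C is a numeric closed field,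
   e.g. algC, standing for the complex numbers): conjugate-linear,
   anti-multiplicative and involutive.  The Banach (norm/completeness)
   structure plays no role in the statement and is omitted. *)
Definition is_star (C : numClosedFieldType) (A : algType C) (s : A -> A) : Prop :=
  [/\ forall x y : A, s (x + y) = s x + s y,
      forall (k : C) (x : A), s (k *: x) = (Num.conj k) *: s x,
      forall x y : A, s (x * y) = s y * s x
    & forall x : A, s (s x) = x].

Definition w_core_invertible (R : nzRingType) (s : R -> R) (a w : R) : Prop :=
  exists x : R, [/\ a * (w * x) ^+ 2 = x,
                    s (w * a * w * x) = w * a * w * x
                  & x * w * (a * w) ^+ 2 = a * w].

Definition group_invertible (R : nzRingType) (b : R) : Prop :=
  exists y : R, [/\ b * y * b = b, y * b * y = y & b * y = y * b].

Definition inv13 (R : nzRingType) (s : R -> R) (b : R) : Prop :=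
  exists y : R, b * y * b = b /\ s (b * y) = b * y.

(* With b = a w, a w-weighted core inverse x makes z = x w satisfy b z^2 = z and
   z b^2 = b, which already forces b z b = b, z b z = z, and exhibits z^2 b as the
   group inverse of b; left-multiplying b z b = b by w shows that x is a
   {1,3}-inverse of w a w.  Conversely, let g be the group inverse of b and y a
   {1,3}-inverse of w a w; multiplying w b y w b = w b on the left by g a gives
   b y w b = b, from which x = g b y is checked to be a w-weighted core inverse. *)
From mathcomp Require Import all_boot all_algebra.
Set Implicit Arguments. Unset Strict Implicit. Unset Printing Implicit Defensive.
Import GRing.Theory.
Local Open Scope ring_scope.

Section SquareInverses.

Variables (R : nzRingType) (b z : R).
Hypotheses (bz2 : b * z ^+ 2 = z) (zb2 : z * b ^+ 2 = b).

Let zbb : z * b * b = b. Proof. by rewrite -mulrA -expr2. Qed.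
Let bzz : b * z * z = z. Proof. by rewrite -mulrA -expr2. Qed.

Lemma inner_inverse_of_sqr : b * z * b = b.
Proof. by rewrite -{2}zbb !mulrA bzz zbb. Qed.

Lemma outer_inverse_of_sqr : z * b * z = z.
Proof. by rewrite -{2}bzz !mulrA zbb bzz. Qed.

Lemma group_invertible_of_sqr : group_invertible b.
Proof.
have zzbb : z * z * b * b = z * b by rewrite -!mulrA -expr2 zb2.
exists (z * z * b); split; rewrite !mulrA.
- by rewrite bzz zbb.
- by rewrite zzbb outer_inverse_of_sqr.
- by rewrite bzz zzbb.
Qed.

End SquareInverses.

Section WeightedCoreInverse.

Variables (R : nzRingType) (s : R -> R) (a w : R).

Lemma w_core_invertible_inverses :
  w_core_invertible s a w -> group_invertible (a * w) /\ inv13 s (w * a * w).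
Proof.
case=> x [core_l core_sym core_r].
have bz2 : a * w * (x * w) ^+ 2 = x * w.
  by rewrite -[in RHS]core_l !expr2 !mulrA.
split; first exact: group_invertible_of_sqr bz2 core_r.
exists x; split=> //.
by have := congr1 (GRing.mul w) (inner_inverse_of_sqr bz2 core_r); rewrite !mulrA.
Qed.

Lemma w_core_invertible_of_inverses (g y : R) :
    a * w * g * (a * w) = a * w -> a * w * g = g * (a * w) ->
    w * a * w * y * (w * a * w) = w * a * w -> s (w * a * w * y) = w * a * w * y ->
  w_core_invertible s a w.
Proof.
rewrite !mulrA => g_inner g_comm y_inner y_sym.
have gbb : g * a * w * a * w = a * w by rewrite -g_comm g_inner.
have bywb : a * w * y * w * a * w = a * w.
  by have := congr1 (GRing.mul (g * a)) y_inner; rewrite !mulrA gbb.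
have wbgb : w * a * w * g * a * w = w * a * w.
  by have := congr1 (GRing.mul w) g_inner; rewrite !mulrA.
have g_comm_l t : t * g * a * w = t * a * w * g.
  by have := congr1 (GRing.mul t) g_comm; rewrite !mulrA.
exists (g * (a * w) * y); rewrite !expr2 !mulrA; split.
- by rewrite g_inner g_comm_l bywb g_comm.
- by rewrite wbgb.
- by have := congr1 (fun t => g * t * a * w) bywb; rewrite !mulrA gbb.
Qed.

Lemma w_core_invertibleP :
  w_core_invertible s a w <-> group_invertible (a * w) /\ inv13 s (w * a * w).
Proof.
split; first exact: w_core_invertible_inverses.
by case=> [[g [g_inner _ g_comm]] [y [y_inner y_sym]]];
  apply: w_core_invertible_of_inverses g_inner g_comm y_inner y_sym.
Qed.

End WeightedCoreInverse.

Theorem theorem2p4 (C : numClosedFieldType) (A : algType C) (star : A -> A)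
    (Hstar : is_star star) (a w : A) :
  w_core_invertible star a w <->
  (group_invertible (a * w) /\ inv13 star (w * a * w)).
Proof. exact: w_core_invertibleP. Qed.
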